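(* Let $$C=\begin{bmatrix}0&-\frac{1+i}{4}&-\frac14&0\\0&0&\frac14&\frac{-1+i}{4}\\0&0&0&\frac14\\0&0&0&0\end{bmatrix}.$$ Then $C$ is nilpotent with $\|C\|<1$, $P_C(x,y)=1-\frac{7}{16}xy+\frac{1}{32}x^2y^2$ (so $C$ has the Circularity property), but $Q_C(x,y)\notin\mathbb{C}[xy]$; hence the associated partial isometry $\mathcal{A}(C)$ does not have the Circularity property.
   Context: $P_C(x,y)=\det(I-xC-yC^* )$, $Q_C(x,y)=\det(I-xC-yC^*-xy(I-C^*C))$; $\mathbb{C}[xy]$ is the set of polynomials in the product $xy$ alone. $H_X(\theta)=\frac12(e^{-i\theta}X+e^{i\theta}X^* )$; $X$ has the Circularity property if the spectrum of $H_X(\theta)$ is independent of $\theta$. For a contraction $C\in M_n$: $D_C=I-C^*C$, $d=\operatorname{rank}D_C$, $B_C$ is a $d\times n$ matrix of full row rank with $B_C^*B_C=D_C$, and $\mathcal{A}(C)=\begin{bmatrix}0&B_C\\0&C\end{bmatrix}$. *)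

From HB Require Import structures.
From mathcomp Require Import all_boot all_order all_algebra.
From mathcomp Require Import reals trigo.
From mathcomp Require Import complex.
Set Implicit Arguments. Unset Strict Implicit. Unset Printing Implicit Defensive.
Import Order.TTheory GRing.Theory Num.Theory.
Local Open Scope ring_scope.

Section Defs.
Variable R : realType.
Local Notation C := (complex R).

Definition adjmx m n (A : 'M[C]_(m, n)) : 'M[C]_(n, m) := (map_mx Num.conj A)^T.

Definition vnorm2 n (v : 'cV[C]_n) : C := \sum_i `|v i 0| ^+ 2.

(* operator norm ||A|| < 1 : sup_{v<>0} |Av|/|v| < 1, i.e. there is r < 1 with
   |Av| <= r |v| for every v. *)
Definition opnorm_lt1 n (A : 'M[C]_n) : Prop :=
  exists r : R, 0 <= r /\ r < 1 /\
    forall v : 'cV[C]_n, vnorm2 (A *m v) <= Complex (r ^+ 2) 0 * vnorm2 v.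

Definition nilpotent n (A : 'M[C]_n) : Prop := exists k : nat, A ^+ k = 0.

Definition expi (t : R) : C := Complex (cos t) (sin t).

Definition Hmx n (X : 'M[C]_n) (t : R) : 'M[C]_n :=
  (2%:R)^-1 *: (expi (- t) *: X + expi t *: adjmx X).

Definition circularity n (X : 'M[C]_n) : Prop :=
  forall t1 t2 : R, forall l : C,
    eigenvalue (Hmx X t1) l <-> eigenvalue (Hmx X t2) l.

(* bivariate polynomials in x (inner variable) and y (outer variable) *)
Definition polyx : {poly {poly C}} := ('X)%:P.
Definition polyy : {poly {poly C}} := 'X.
Definition cst (c : C) : {poly {poly C}} := c%:P%:P.
Definition liftmx n (A : 'M[C]_n) : 'M[{poly {poly C}}]_n := map_mx cst A.

Definition P_of n (A : 'M[C]_n) : {poly {poly C}} :=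
  \det (1%:M - polyx *: liftmx A - polyy *: liftmx (adjmx A)).

Definition Q_of n (A : 'M[C]_n) : {poly {poly C}} :=
  \det (1%:M - polyx *: liftmx A - polyy *: liftmx (adjmx A)
        - (polyx * polyy) *: liftmx (1%:M - adjmx A *m A)).

Definition in_Cxy (P : {poly {poly C}}) : Prop :=
  exists p : {poly C},
    P = \sum_(i < size p) cst p`_i * (polyx * polyy) ^+ i.

Definition Cmat : 'M[C]_4 :=
  \matrix_(i < 4, j < 4)
    (if (i == 0 :> nat) && (j == 1 :> nat) then - Complex 1 1 / 4%:R
     else if (i == 0 :> nat) && (j == 2 :> nat) then - (4%:R)^-1
     else if (i == 1 :> nat) && (j == 2 :> nat) then (4%:R)^-1
     else if (i == 1 :> nat) && (j == 3 :> nat) then Complex (-1) 1 / 4%:R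
     else if (i == 2 :> nat) && (j == 3 :> nat) then (4%:R)^-1
     else 0).

Definition Amat n d (A : 'M[C]_n) (B : 'M[C]_(d, n)) : 'M[C]_(d + n) :=
  block_mx 0 B 0 A.

End Defs.

From HB Require Import structures.
From mathcomp Require Import all_boot all_order all_algebra.
From mathcomp Require Import reals trigo.
From mathcomp Require Import complex.
From mathcomp Require Import ring.
Import Order.TTheory GRing.Theory Num.Theory.

Set Implicit Arguments.
Unset Strict Implicit.
Unset Printing Implicit Defensive.

Local Open Scope ring_scope.

(* The spectral facts about C come from two explicit determinants:
   det(l - aC - bC^* ) = l^4 - 7/16 ab l^2 + 1/32 (ab)^2, and Q_C(a, b).  The
   first depends on a, b only through ab; with l = 1 it gives P_C, and since
   H_C(theta) has ab = e^{-i theta} e^{i theta} / 4 = 1/4 it gives circularity.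
   Polynomials in xy are symmetric in x, y, whereas Q_C(1, 2) <> Q_C(2, 1).
   For the partial isometry X = A(C), H_X(pi) = - H_X(0), so circularity would
   make the spectrum of H_X(0) symmetric about 0.  Eliminating the first block
   of l - H_X(0) with B^*B = 1 - C^*C gives det(l - H_X(0)) = l^(d+4) Q_C(s, s)
   with s = 1/(2l).  The odd part of s |-> Q_C(s, s) is s^7/512, so a root s
   of it yields the eigenvalue 1/(2s) of H_X(0) whose opposite is not one. *)

Lemma det_mx4 (T : comNzRingType) (f : nat -> nat -> T) :
  \det (\matrix_(i < 4, j < 4) f i j) =
      f 0 0 * f 1 1 * f 2 2 * f 3 3 - f 0 0 * f 1 1 * f 2 3 * f 3 2
    - f 0 0 * f 1 2 * f 2 1 * f 3 3 + f 0 0 * f 1 2 * f 2 3 * f 3 1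
    + f 0 0 * f 1 3 * f 2 1 * f 3 2 - f 0 0 * f 1 3 * f 2 2 * f 3 1
    - f 0 1 * f 1 0 * f 2 2 * f 3 3 + f 0 1 * f 1 0 * f 2 3 * f 3 2
    + f 0 1 * f 1 2 * f 2 0 * f 3 3 - f 0 1 * f 1 2 * f 2 3 * f 3 0
    - f 0 1 * f 1 3 * f 2 0 * f 3 2 + f 0 1 * f 1 3 * f 2 2 * f 3 0
    + f 0 2 * f 1 0 * f 2 1 * f 3 3 - f 0 2 * f 1 0 * f 2 3 * f 3 1
    - f 0 2 * f 1 1 * f 2 0 * f 3 3 + f 0 2 * f 1 1 * f 2 3 * f 3 0
    + f 0 2 * f 1 3 * f 2 0 * f 3 1 - f 0 2 * f 1 3 * f 2 1 * f 3 0
    - f 0 3 * f 1 0 * f 2 1 * f 3 2 + f 0 3 * f 1 0 * f 2 2 * f 3 1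
    + f 0 3 * f 1 1 * f 2 0 * f 3 2 - f 0 3 * f 1 1 * f 2 2 * f 3 0
    - f 0 3 * f 1 2 * f 2 0 * f 3 1 + f 0 3 * f 1 2 * f 2 1 * f 3 0.
Proof.
rewrite (expand_det_row _ ord0) !big_ord_recl big_ord0 /cofactor.
rewrite !(expand_det_row _ ord0) !big_ord_recl !big_ord0 /cofactor.
rewrite !(expand_det_row _ ord0) !big_ord_recl !big_ord0 /cofactor.
by rewrite !det_mx11 !mxE /= /bump /=; ring.
Qed.

Lemma strictly_upper_exprE (T : pzSemiRingType) n (A : 'M[T]_n.+1) k
    (i j : 'I_n.+1) :
  (forall i j : 'I_n.+1, (j <= i)%N -> A i j = 0) ->
  (j < i + k)%N -> (A ^+ k) i j = 0.
Proof.
move=> A_upper; elim: k i j => [|k IHk] i j lt_j_ik.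
  by rewrite expr0 mxE; case: eqP lt_j_ik => [->|]; rewrite ?addn0 ?ltnn.
rewrite exprSr -mulmxE mxE big1 // => m _.
have [lt_m_ik|le_ik_m] := ltnP m (i + k); first by rewrite IHk ?mul0r.
by rewrite A_upper ?mulr0 // -ltnS (leq_trans lt_j_ik) // addnS.
Qed.

Lemma strictly_upper_nilpotent (T : pzSemiRingType) n (A : 'M[T]_n.+1) :
  (forall i j : 'I_n.+1, (j <= i)%N -> A i j = 0) -> A ^+ n.+1 = 0.
Proof.
move=> A_upper; apply/matrixP => i j; rewrite mxE strictly_upper_exprE //.
exact: leq_trans (ltn_ord j) (leq_addl _ _).
Qed.

Lemma detN (T : comPzRingType) n (A : 'M[T]_n) : \det (- A) = (-1) ^+ n * \det A.
Proof. by rewrite -scaleN1r detZ. Qed.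

Lemma eigenvalue_det (F : fieldType) n (A : 'M[F]_n) (l : F) :
  eigenvalue A l = (\det (l%:M - A) == 0).
Proof.
rewrite /eigenvalue /eigenspace kermx_eq0 row_free_unit unitmxE unitfE negbK.
by rewrite -opprB detN mulf_eq0 expf_eq0 oppr_eq0 oner_eq0 andbF.
Qed.

Lemma eigenvalueN (F : fieldType) n (A : 'M[F]_n) (l : F) :
  eigenvalue (- A) l = eigenvalue A (- l).
Proof.
apply/eigenvalueP/eigenvalueP => -[v vA nz_v]; exists v => //.
  by rewrite scaleNr -vA mulmxN opprK.
by rewrite mulmxN vA scaleNr opprK.
Qed.

Lemma eigenvalue_eq_det (F : fieldType) n (A B : 'M[F]_n) l :
  \det (l%:M - A) = \det (l%:M - B) -> eigenvalue A l = eigenvalue B l.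
Proof. by rewrite !eigenvalue_det => ->. Qed.

Lemma poly_horner_eq0 (D : numDomainType) (p : {poly D}) :
  (forall x, p.[x] = 0) -> p = 0.
Proof.
move=> p_eq0; apply/eqP; apply: contraT => /max_poly_roots max_roots.
have := max_roots [seq i%:R | i <- iota 0 (size p)].
rewrite size_map size_iota ltnn; apply.
  by apply/allP => _ /mapP[i _ ->]; rewrite /root p_eq0.
by rewrite map_inj_uniq ?iota_uniq // => i j /eqP; rewrite eqr_nat => /eqP.
Qed.

Section ComplexMatrices.
Variable R : realType.
Local Notation C := (complex R).

Lemma expiNM (t : R) : expi (- t) * expi t = 1.
Proof.
apply/eqP; rewrite eq_complex /= cosN sinN !mulNr opprK -!expr2 cos2Dsin2 eqxx /=.
by rewrite mulrC subrr.
Qed.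

Lemma HmxE n (X : 'M[C]_n) t :
  Hmx X t = (expi (- t) / 2%:R) *: X + (expi t / 2%:R) *: adjmx X.
Proof. by rewrite /Hmx scalerDr !scalerA ![_^-1 * _]mulrC. Qed.

Lemma Hmx0 n (X : 'M[C]_n) : Hmx X 0 = 2%:R^-1 *: (X + adjmx X).
Proof.
have expi0 : expi 0 = 1 :> C by rewrite /expi cos0 sin0.
by rewrite /Hmx oppr0 expi0 !scale1r.
Qed.

Lemma Hmx_pi n (X : 'M[C]_n) : Hmx X pi = - Hmx X 0.
Proof.
have expiNpi : expi (- pi) = -1 :> C.
  by apply/eqP; rewrite /expi cosN sinN cospi sinpi eq_complex /= oppr0 !eqxx.
have expipi : expi pi = -1 :> C.
  by apply/eqP; rewrite /expi cospi sinpi eq_complex /= oppr0 !eqxx.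
by rewrite Hmx0 /Hmx expiNpi expipi !scaleN1r -opprD scalerN.
Qed.

Lemma circularityP n (X : 'M[C]_n) :
  (forall t1 t2 (l : C), \det (l%:M - Hmx X t1) = \det (l%:M - Hmx X t2)) ->
  circularity X.
Proof. by move=> detH t1 t2 l; rewrite (eigenvalue_eq_det (detH t1 t2 l)). Qed.

Lemma circularity_eigenvalueN n (X : 'M[C]_n) (l : C) :
  circularity X -> eigenvalue (Hmx X 0) l -> eigenvalue (Hmx X 0) (- l).
Proof. by move=> circX /(circX 0 pi l).1; rewrite Hmx_pi eigenvalueN. Qed.

Definition eval2 (a b : C) : {rmorphism {poly {poly C}} -> C} :=
  horner_eval b \o map_poly (horner_eval a).

Lemma eval2_cst a b c : eval2 a b (cst c) = c.
Proof. by rewrite /= map_polyC /= !horner_evalE !hornerC. Qed.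

Lemma eval2_x a b : eval2 a b (polyx R) = a.
Proof. by rewrite /= map_polyC /= !horner_evalE hornerC hornerX. Qed.

Lemma eval2_y a b : eval2 a b (polyy R) = b.
Proof. by rewrite /= map_polyX horner_evalE hornerX. Qed.

Lemma eval2_inj p q : (forall a b, eval2 a b p = eval2 a b q) -> p = q.
Proof.
move=> eq_pq; apply/eqP; rewrite -subr_eq0; apply/eqP/polyP => j; rewrite coef0.
apply: poly_horner_eq0 => a.
have : map_poly (horner_eval a) (p - q) = 0.
  apply: poly_horner_eq0 => b.
  by rewrite -[_.[b]]/(eval2 a b (p - q)) rmorphB eq_pq subrr.
by move/(congr1 (fun s : {poly C} => s`_j)); rewrite coef_map coef0.
Qed.

Lemma eval2_P_of n (A : 'M[C]_n) (a b : C) :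
  eval2 a b (P_of A) = \det (1%:M - a *: A - b *: adjmx A).
Proof.
rewrite /P_of -det_map_mx; congr (\det _); apply/matrixP => i j.
by rewrite !mxE !rmorphB !rmorphM rmorph_nat eval2_x eval2_y !eval2_cst.
Qed.

Lemma eval2_Q_of n (A : 'M[C]_n) (a b : C) :
  eval2 a b (Q_of A) =
  \det (1%:M - a *: A - b *: adjmx A - (a * b) *: (1%:M - adjmx A *m A)).
Proof.
rewrite /Q_of -det_map_mx; congr (\det _); apply/matrixP => i j.
by rewrite !mxE !rmorphB !rmorphM rmorph_nat eval2_x eval2_y !eval2_cst.
Qed.

Lemma in_Cxy_eval2C P : in_Cxy P -> forall a b : C, eval2 a b P = eval2 b a P.
Proof.
move=> [p ->] a b; rewrite !rmorph_sum; apply: eq_bigr => i _.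
by rewrite !rmorphM !rmorphXn !rmorphM !eval2_cst !eval2_x !eval2_y (mulrC a b).
Qed.

Lemma adjmx0 m p : adjmx (0 : 'M[C]_(m, p)) = 0.
Proof. by apply/matrixP => i j; rewrite !mxE conjC0. Qed.

Lemma adjmx_block m1 m2 p1 p2 (Aul : 'M[C]_(m1, p1)) (Aur : 'M[C]_(m1, p2))
    (Adl : 'M[C]_(m2, p1)) (Adr : 'M[C]_(m2, p2)) :
  adjmx (block_mx Aul Aur Adl Adr) =
  block_mx (adjmx Aul) (adjmx Adl) (adjmx Aur) (adjmx Adr).
Proof. by rewrite /adjmx map_block_mx tr_block_mx. Qed.

Section PartialIsometry.
Variables (n d : nat) (A : 'M[C]_n) (B : 'M[C]_(d, n)).
Hypothesis BB : adjmx B *m B = 1%:M - adjmx A *m A.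

Lemma Hmx0_Amat :
  Hmx (Amat A B) 0 = 2%:R^-1 *: block_mx 0 B (adjmx B) (A + adjmx A).
Proof.
by rewrite Hmx0 /Amat adjmx_block !adjmx0 add_block_mx !addr0 add0r.
Qed.

Lemma det_Hmx0_Amat (l : C) : l != 0 ->
  let s := (2%:R * l)^-1 in
  \det (l%:M - Hmx (Amat A B) 0) =
  l ^+ (d + n) *
  \det (1%:M - s *: A - s *: adjmx A - (s * s) *: (1%:M - adjmx A *m A)).
Proof.
move=> l_neq0 s.
have two_neq0 : 2%:R != 0 :> C by rewrite pnatr_eq0.
have ls : l * s = 2%:R^-1 by rewrite /s invfM mulrCA mulfV ?mulr1.
have lss : l * (s * s) = 2%:R^-1 * s by rewrite mulrA ls.
set Q := 1%:M - _ - _ - _.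
have -> : l%:M - Hmx (Amat A B) 0 =
    block_mx 1 0 (- s *: adjmx B) 1 *m block_mx l%:M (- 2%:R^-1 *: B) 0 (l *: Q).
  rewrite Hmx0_Amat mulmx_block (scalar_mx_block d n) scale_block_mx.
  rewrite opp_block_mx add_block_mx !mul1mx !mul0mx !addr0 scaler0 subr0 sub0r.
  congr block_mx; first by rewrite scaleNr.
    by rewrite sub0r mul_mx_scalar scalerA mulrN ls scaleNr.
  rewrite -scalemxAl -scalemxAr BB scalerA mulrNN (mulrC s) /Q.
  rewrite !scalerBr !scalerA ls lss scalemx1.
  by rewrite [RHS]addrC subrK scalemx1 scalerDr opprD addrA.
by rewrite det_mulmx det_lblock det_ublock !det1 !mul1r det_scalar detZ mulrA -exprD.
Qed.

End PartialIsometry.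

End ComplexMatrices.

Section TheMatrix.
Variable R : realType.
Local Notation C := (complex R).
Local Notation Cm := (Cmat R).

Definition C_entry (i j : nat) : C :=
  match i, j with
  | 0, 1 => - (1 + 'i) / 4%:R
  | 0, 2 => - 4%:R^-1
  | 1, 2 => 4%:R^-1
  | 1, 3 => (-1 + 'i) / 4%:R
  | 2, 3 => 4%:R^-1
  | _, _ => 0
  end.

Definition Cadj_entry (i j : nat) : C :=
  match i, j with
  | 1, 0 => - (1 - 'i) / 4%:R
  | 2, 0 => - 4%:R^-1
  | 2, 1 => 4%:R^-1
  | 3, 1 => (-1 - 'i) / 4%:R
  | 3, 2 => 4%:R^-1
  | _, _ => 0
  end.

Definition Cdefect_entry (i j : nat) : C :=
  match i, j with
  | 0, 0 => 1
  | 1, 1 => 7%:R / 8%:R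
  | 1, 2 => - (1 - 'i) / 16%:R
  | 2, 1 => - (1 + 'i) / 16%:R
  | 2, 2 => 7%:R / 8%:R
  | 2, 3 => (1 - 'i) / 16%:R
  | 3, 2 => (1 + 'i) / 16%:R
  | 3, 3 => 13%:R / 16%:R
  | _, _ => 0
  end.

(* Specialisations that [ring]/[field] and [rewrite] can use: the former
   treat ['i] as an atom, the latter meets [Num.conj] as an rmorphism. *)
Lemma sqrCi_complex : 'i ^+ 2 = -1 :> C. Proof. exact: sqrCi. Qed.

Lemma conjCi_rmorph : (Num.conj : {rmorphism C -> C}) 'i = - 'i.
Proof. exact: conjCi. Qed.

Lemma Cmat_entries : Cm = \matrix_(i < 4, j < 4) C_entry i j.
Proof.
have c11 : Complex 1 1 = 1 + 'i :> C.
  by apply/eqP; rewrite eq_complex /= ?addr0 ?add0r !eqxx.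
have cm11 : Complex (-1) 1 = -1 + 'i :> C.
  by apply/eqP; rewrite eq_complex /= ?oppr0 ?addr0 ?add0r !eqxx.
apply/matrixP => -[[|[|[|[|i]]]] lti] -[[|[|[|[|j]]]] ltj] //; rewrite !mxE /=.
all: by rewrite ?c11 ?cm11.
Qed.

Lemma adjmx_Cmat : adjmx Cm = \matrix_(i < 4, j < 4) Cadj_entry i j.
Proof.
rewrite /adjmx Cmat_entries.
apply/matrixP => -[[|[|[|[|i]]]] lti] -[[|[|[|[|j]]]] ltj] //; rewrite !mxE.
all: cbn [C_entry Cadj_entry nat_of_ord].
all: rewrite ?conjC0 ?rmorphN ?fmorph_div ?fmorphV ?rmorph_nat.
all: by rewrite ?rmorphN ?rmorphD ?rmorphN ?rmorph1 ?conjCi_rmorph.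
Qed.

Lemma defect_Cmat :
  1%:M - adjmx Cm *m Cm = \matrix_(i < 4, j < 4) Cdefect_entry i j.
Proof.
rewrite adjmx_Cmat Cmat_entries.
apply/matrixP => -[[|[|[|[|i]]]] lti] -[[|[|[|[|j]]]] ltj] //.
all: rewrite !mxE !big_ord_recl big_ord0 !mxE /=.
all: by field: sqrCi_complex.
Qed.

Lemma det_pencil_Cmat (l a b : C) :
  \det (l%:M - a *: Cm - b *: adjmx Cm) =
  l ^+ 4 - 7%:R / 16%:R * (a * b) * l ^+ 2 + 32%:R^-1 * (a * b) ^+ 2.
Proof.
pose f i j := (i == j :> nat)%:R * l - a * C_entry i j - b * Cadj_entry i j.
rewrite (_ : _ - _ - _ = \matrix_(i < 4, j < 4) f i j); last first.
  by apply/matrixP => i j; rewrite adjmx_Cmat Cmat_entries !mxE /f mulr_natl.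
rewrite det_mx4 /f /=.
by field: sqrCi_complex.
Qed.

Definition qC (a b : C) : C :=
  1 - 4%:R * (a * b) + 89%:R / 16%:R * (a * b) ^+ 2 - 201%:R / 64%:R * (a * b) ^+ 3
  + 1247%:R / 2048%:R * (a * b) ^+ 4
  + (a * b) ^+ 3 * ((1 + 'i) * a + (1 - 'i) * b) / 1024%:R.

Lemma det_Q_Cmat (a b : C) :
  \det (1%:M - a *: Cm - b *: adjmx Cm - (a * b) *: (1%:M - adjmx Cm *m Cm))
  = qC a b.
Proof.
pose f i j := (i == j :> nat)%:R - a * C_entry i j - b * Cadj_entry i j
              - a * b * Cdefect_entry i j.
rewrite (_ : _ - _ - _ - _ = \matrix_(i < 4, j < 4) f i j); last first.
  by apply/matrixP => i j; rewrite defect_Cmat adjmx_Cmat Cmat_entries !mxE /f.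
rewrite det_mx4 /f /= /qC.
by field: sqrCi_complex.
Qed.

Lemma Cmat_nilpotent : Cm ^+ 4 = 0.
Proof.
apply: strictly_upper_nilpotent; rewrite Cmat_entries.
by move=> -[[|[|[|[|i]]]] ?] -[[|[|[|[|j]]]] ?] //= _; rewrite mxE.
Qed.

Lemma det_Hmx_Cmat t (l : C) :
  \det (l%:M - Hmx Cm t) = l ^+ 4 - 7%:R / 64%:R * l ^+ 2 + 512%:R^-1.
Proof.
rewrite HmxE opprD addrA det_pencil_Cmat.
have -> : expi (- t) / 2%:R * (expi t / 2%:R) = (2%:R * 2%:R)^-1 :> C.
  by rewrite mulrACA expiNM mul1r invfM.
by field.
Qed.

Lemma Cmat_circularity : circularity Cm.
Proof.
by apply: circularityP => t1 t2 l; rewrite [LHS]det_Hmx_Cmat [RHS]det_Hmx_Cmat.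
Qed.

Lemma P_Cmat :
  P_of Cm = 1 - cst (7%:R / 16%:R) * (polyx R * polyy R)
              + cst 32%:R^-1 * (polyx R * polyy R) ^+ 2.
Proof.
apply: eval2_inj => a b; rewrite eval2_P_of det_pencil_Cmat.
rewrite !rmorphD !rmorphN rmorph1 [eval2 a b (_ * _ ^+ 2)]rmorphM rmorphXn.
by rewrite !rmorphM !eval2_cst !eval2_x !eval2_y; ring.
Qed.

Lemma Q_Cmat_not_in_Cxy : ~ in_Cxy (Q_of Cm).
Proof.
move=> /in_Cxy_eval2C /(_ 1 2%:R); rewrite !eval2_Q_of 2!det_Q_Cmat => /eqP.
rewrite -subr_eq0 (_ : qC 1 2%:R - qC 2%:R 1 = - ('i / 64%:R)); last first.
  by rewrite /qC; field.
by rewrite oppr_eq0 mulf_eq0 invr_eq0 pnatr_eq0 orbF (negbTE (neq0Ci _)).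
Qed.

Lemma Cmat_norm_sos (g : nat -> C) :
  9%:R / 16%:R * (\sum_(k < 4) `|g k| ^+ 2)
    - \sum_(i < 4) `|\sum_(k < 4) C_entry i k * g k| ^+ 2 =
  9%:R / 16%:R * `|g 0| ^+ 2 + 5%:R / 16%:R * `|g 1| ^+ 2
    + 5%:R / 16%:R * `|g 2| ^+ 2 + 4%:R^-1 * `|g 3| ^+ 2
    + (`|(1 + 'i) * g 1 - g 2| ^+ 2 + `|g 2 + (1 - 'i) * g 3| ^+ 2) / 16%:R.
Proof.
rewrite !big_ord_recl !big_ord0 /= !normCK.
rewrite !rmorphD !rmorphM !fmorphV !rmorph_nat.
rewrite !rmorphN !rmorphB !rmorphD !rmorph1 !conjCi_rmorph !rmorph0.
by field: sqrCi_complex.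
Qed.

Lemma Cmat_opnorm_lt1 : opnorm_lt1 Cm.
Proof.
exists (3%:R / 4%:R); split; first by rewrite divr_ge0 ?ler0n.
split; first by rewrite ltr_pdivrMr ?ltr0n // mul1r ltr_nat.
move=> v; pose g k := v (inord k) 0.
have norm_v : vnorm2 v = \sum_(k < 4) `|g k| ^+ 2.
  by apply: eq_bigr => k _; rewrite /g inord_val.
have norm_Cv :
    vnorm2 (Cm *m v) = \sum_(i < 4) `|\sum_(k < 4) C_entry i k * g k| ^+ 2.
  apply: eq_bigr => i _; rewrite mxE Cmat_entries; congr (`|_| ^+ 2).
  by apply: eq_bigr => k _; rewrite mxE /g inord_val.
have -> : Complex ((3%:R / 4%:R) ^+ 2) 0 = 9%:R / 16%:R :> C.
  rewrite -[Complex _ 0]/(((3%:R / 4%:R) ^+ 2)%:C)%C rmorphXn fmorph_div !rmorph_nat.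
  by field.
rewrite -subr_ge0 norm_v norm_Cv Cmat_norm_sos.
by rewrite !addr_ge0 ?mulr_ge0 ?addr_ge0 ?divr_ge0 ?invr_ge0 ?exprn_ge0
  ?normr_ge0 ?ler0n.
Qed.

Lemma qC_diag_root : exists s : C, qC s s = 0.
Proof.
(* [coef] lists the coefficients of s |-> qC s s. *)
pose coef i : C := match i with
  | 0 => 1 | 2 => - 4%:R | 4 => 89%:R / 16%:R | 6 => - (201%:R / 64%:R)
  | 7 => 512%:R^-1 | 8 => 1247%:R / 2048%:R | _ => 0 end.
have size_q : size (\poly_(i < 9) coef i) = 9.
  by rewrite size_poly_eq //= mulf_neq0 ?invr_eq0 ?pnatr_eq0.
have /closed_rootP[s /rootP q_s] : size (\poly_(i < 9) coef i) != 1.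
  by rewrite size_q.
exists s; rewrite -q_s horner_poly !big_ord_recl big_ord0 /bump /= /qC.
by field.
Qed.

Lemma qC_oddN (s : C) : qC (- s) (- s) = qC s s - s ^+ 7 / 256%:R.
Proof. by rewrite /qC; field. Qed.

Section PartialIsometryCmat.
Variables (d : nat) (B : 'M[C]_(d, 4)).
Hypothesis BB : adjmx B *m B = 1%:M - adjmx Cm *m Cm.

Lemma eigenvalue_Hmx0_Amat_Cmat (s : C) : s != 0 ->
  eigenvalue (Hmx (Amat Cm B) 0) (2%:R * s)^-1 = (qC s s == 0).
Proof.
move=> s_neq0; set l := (2%:R * s)^-1.
have l_neq0 : l != 0 by rewrite invr_eq0 mulf_neq0 ?pnatr_eq0.
have -> : s = (2%:R * l)^-1 by rewrite /l invfM invrK mulKf ?pnatr_eq0.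
rewrite eigenvalue_det (det_Hmx0_Amat BB l_neq0) det_Q_Cmat.
by rewrite mulf_eq0 expf_eq0 (negbTE l_neq0) andbF.
Qed.

Lemma Amat_Cmat_not_circular : ~ circularity (Amat Cm B).
Proof.
move=> circA; have [s qs0] := qC_diag_root.
have s_neq0 : s != 0.
  have qC00 : qC 0 0 = 1 :> C by rewrite /qC; ring.
  by apply/eqP => s0; move: qs0; rewrite s0 qC00 => /eqP; rewrite oner_eq0.
have := eigenvalue_Hmx0_Amat_Cmat s_neq0; rewrite qs0 eqxx.
move=> /(circularity_eigenvalueN circA).
rewrite -invrN -mulrN eigenvalue_Hmx0_Amat_Cmat ?oppr_eq0 // qC_oddN qs0 sub0r.
by rewrite oppr_eq0 mulf_eq0 invr_eq0 pnatr_eq0 orbF expf_eq0 (negbTE s_neq0) andbF.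
Qed.

End PartialIsometryCmat.

End TheMatrix.

Theorem mainTheorem12 (R : realType) :
  nilpotent (Cmat R) /\
  opnorm_lt1 (Cmat R) /\
  P_of (Cmat R) =
    1 - cst (7%:R / 16%:R) * (polyx R * polyy R)
      + cst (32%:R)^-1 * (polyx R * polyy R) ^+ 2 /\
  circularity (Cmat R) /\
  ~ in_Cxy (Q_of (Cmat R)) /\
  (forall (d : nat) (B : 'M[complex R]_(d, 4)),
     row_free B -> adjmx B *m B = 1%:M - adjmx (Cmat R) *m Cmat R ->
     ~ circularity (Amat (Cmat R) B)).
Proof.
split; first by exists 4%N; exact: Cmat_nilpotent.
split; first exact: Cmat_opnorm_lt1.
split; first exact: P_Cmat.
split; first exact: Cmat_circularity.
split; first exact: Q_Cmat_not_in_Cxy.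
by move=> d B _ BB; exact: Amat_Cmat_not_circular BB.
Qed.
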